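(* Let $K$, $U$, $\Gamma$ be as in the context and let $M$ be a $U$-module. (1) If $u\in U$, $x\in M$ and $\mathbf q\in\operatorname{Supp}(\Gamma ux)$, then there exists $\mathbf p\in\operatorname{Ass}(\Gamma x)$ such that $\dfrac{\Gamma u\Gamma}{\mathbf q u\Gamma+\Gamma u\mathbf p}\neq 0$. (2) If all prime ideals in $\operatorname{Ass}(M)$ have the same coheight, then $\operatorname{Ass}(\Gamma(x+y))\subseteq\operatorname{Ass}(\Gamma x)\cup\operatorname{Ass}(\Gamma y)$ for all $x,y\in M$.
   Context: $K$ is an algebraically closed field of characteristic zero. $U$ is a $K$-algebra and $\Gamma\subseteq U$ a commutative $K$-subalgebra such that: (i) $\Gamma$ is finitely generated as a $K$-algebra; (ii) there are finitely many $u_1,\dots,u_n\in U$ generating $U$ as a $K$-algebra together with $\Gamma$; (iii) for every $u\in U$, $\Gamma u\Gamma$ is finitely generated both as a left and as a right $\Gamma$-module. Modules over $U$ are regarded as $\Gamma$-modules by restriction. $\operatorname{Supp}(N)=\{\mathbf p\in\operatorname{Spec}\Gamma:N_{\mathbf p}\ne0\}$; $\operatorname{Ass}(N)$ is the set of primes of the form $\operatorname{ann}_\Gamma(z)$, $z\in N$. Coheight: with $Z_0=\operatorname{Specm}\Gamma$ and $Z_i=Z_{i-1}\cup\operatorname{Max}(\operatorname{Spec}\Gamma\setminus Z_{i-1})$ ($\operatorname{Max}$ = inclusion-maximal elements), the coheight of $\mathbf p$ is the least $i$ with $\mathbf p\in Z_i$. *)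

From HB Require Import structures.
From mathcomp Require Import all_boot all_order all_algebra.
Set Implicit Arguments. Unset Strict Implicit. Unset Printing Implicit Defensive.
Import GRing.Theory.
Local Open Scope ring_scope.

Section Defs.
Variables (K : fieldType) (U : algType K).

Inductive subalg_gen (S : U -> Prop) : U -> Prop :=
| sg_in x : S x -> subalg_gen S x
| sg_one : subalg_gen S 1
| sg_add x y : subalg_gen S x -> subalg_gen S y -> subalg_gen S (x + y)
| sg_mul x y : subalg_gen S x -> subalg_gen S y -> subalg_gen S (x * y)
| sg_scale (k : K) x : subalg_gen S x -> subalg_gen S (k *: x).

Definition comm_subalg (G : U -> Prop) : Prop :=
  [/\ G 1, (forall x y, G x -> G y -> G (x + y)), (forall x y, G x -> G y -> G (x * y)),
      (forall (k : K) x, G x -> G (k *: x)) & (forall x y, G x -> G y -> x * y = y * x)].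

Definition GuG (G : U -> Prop) (u w : U) : Prop :=
  exists s : seq (U * U), (forall ab, ab \in s -> G ab.1 /\ G ab.2) /\
    w = \sum_(ab <- s) ab.1 * u * ab.2.

Definition quG_Gup (G q p : U -> Prop) (u w : U) : Prop :=
  exists s : seq (U * U),
    (forall ab, ab \in s -> (q ab.1 /\ G ab.2) \/ (G ab.1 /\ p ab.2)) /\
    w = \sum_(ab <- s) ab.1 * u * ab.2.

Definition GuG_fg_left (G : U -> Prop) (u : U) : Prop :=
  exists vs : seq U, (forall v, v \in vs -> GuG G u v) /\
    forall w, GuG G u w -> exists cs : seq U, [/\ size cs = size vs,
       (forall c, c \in cs -> G c) & w = \sum_(i < size vs) cs`_i * vs`_i].

Definition GuG_fg_right (G : U -> Prop) (u : U) : Prop :=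
  exists vs : seq U, (forall v, v \in vs -> GuG G u v) /\
    forall w, GuG G u w -> exists cs : seq U, [/\ size cs = size vs,
       (forall c, c \in cs -> G c) & w = \sum_(i < size vs) vs`_i * cs`_i].

Definition standing (G : U -> Prop) : Prop :=
  [/\ comm_subalg G,
      (exists s : seq U, (forall x, x \in s -> G x) /\
          forall g, G g -> subalg_gen (fun x => x \in s) g),
      (exists us : seq U, forall w, subalg_gen (fun x => G x \/ x \in us) w)
    & (forall u, GuG_fg_left G u /\ GuG_fg_right G u)].

Definition subset (A B : U -> Prop) := forall x, A x -> B x.

Definition idealG (G P : U -> Prop) : Prop :=
  [/\ subset P G, P 0, (forall x y, P x -> P y -> P (x + y))
    & (forall g x, G g -> P x -> P (g * x))].

Definition primeG (G P : U -> Prop) : Prop :=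
  [/\ idealG G P, ~ P 1 & forall a b, G a -> G b -> P (a * b) -> P a \/ P b].

Definition maximalG (G P : U -> Prop) : Prop :=
  [/\ idealG G P, ~ P 1 &
    forall Q, idealG G Q -> ~ Q 1 -> subset P Q -> subset Q P].

Fixpoint Zco (G : U -> Prop) (i : nat) (P : U -> Prop) : Prop :=
  match i with
  | 0 => maximalG G P
  | i.+1 => Zco G i P \/
      [/\ primeG G P, ~ Zco G i P &
        forall Q, primeG G Q -> ~ Zco G i Q -> subset P Q -> subset Q P]
  end.

Definition coheight (G : U -> Prop) (P : U -> Prop) (n : nat) : Prop :=
  Zco G n P /\ forall j, (j < n)%N -> ~ Zco G j P.

Variable M : lmodType U.

(* Supp(N) for a Gamma-submodule N (given as a predicate):
   N_p <> 0, i.e. some z in N with z/1 <> 0 in N_p *)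
Definition Supp (G : U -> Prop) (N : M -> Prop) (P : U -> Prop) : Prop :=
  primeG G P /\ exists z, N z /\ forall s, G s -> ~ P s -> s *: z != 0.

Definition Ass (G : U -> Prop) (N : M -> Prop) (P : U -> Prop) : Prop :=
  primeG G P /\ exists z, N z /\ forall g, P g <-> (G g /\ g *: z = 0).

Definition Gcyc (G : U -> Prop) (x : M) : M -> Prop :=
  fun z => exists g, G g /\ z = g *: x.

End Defs.

(* Gamma is noetherian by the Hilbert basis theorem, adjoining its generators
   one at a time.

   (2) Let P = ann(z) with z = g(x + y). If some multiple hz <> 0 lies in
   Gamma x, then P = ann(hz) is associated to Gamma x. Otherwise
   ann(gy) <= P, so localizing at P produces an associated prime Q <= P of
   Gamma y; both have the same coheight, hence Q = P.

   (1) Suppose Gamma u Gamma = q u Gamma + Gamma u p for every p in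
   Ass(Gamma x). The ideal A = {c | Gamma u Gamma c <= q u Gamma} is then
   comaximal with ann(x): a maximal ideal m containing both would contain an
   associated prime of Gamma x, and Nakayama for the finitely generated right
   module Gamma u Gamma gives an element of A congruent to 1 modulo m. Writing
   1 = a + i accordingly gives Gamma u Gamma x = q (Gamma u Gamma x), and
   Nakayama for this finitely generated module gives c = 1 mod q with
   c u x = 0, contradicting q in Supp(Gamma u x). *)

From Pilot Require Import Defs.
From mathcomp Require Import all_boot all_algebra.
From Stdlib Require Import ClassicalEpsilon Classical.
Set Implicit Arguments. Unset Strict Implicit. Unset Printing Implicit Defensive.
Import GRing.Theory.
Local Open Scope ring_scope.
Local Notation psub := Defs.subset.

Section CommSubalg.
Variables (K : fieldType) (U : algType K) (G : U -> Prop).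
Hypothesis HG : comm_subalg G.

Lemma csa1 : G 1. Proof. by case: HG. Qed.
Lemma csaD x y : G x -> G y -> G (x + y). Proof. by case: HG => _ H _ _ _; apply: H. Qed.
Lemma csaM x y : G x -> G y -> G (x * y). Proof. by case: HG => _ _ H _ _; apply: H. Qed.
Lemma csaZ (k : K) x : G x -> G (k *: x). Proof. by case: HG => _ _ _ H _; apply: H. Qed.
Lemma csaC x y : G x -> G y -> x * y = y * x. Proof. by case: HG => _ _ _ _ H; apply: H. Qed.
Lemma csa0 : G 0. Proof. by rewrite -(scale0r 1); apply: csaZ; apply: csa1. Qed.
Lemma csaN x : G x -> G (- x). Proof. by move=> Gx; rewrite -scaleN1r; apply: csaZ. Qed.
Lemma csaB x y : G x -> G y -> G (x - y).
Proof. by move=> Gx Gy; apply: csaD => //; apply: csaN. Qed.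

Lemma csa_mulrCA a b c : G a -> G b -> a * (b * c) = b * (a * c).
Proof. by move=> Ga Gb; rewrite mulrA (csaC Ga Gb) -mulrA. Qed.

Lemma csa_mulrAC a b c : G b -> G c -> (a * b) * c = (a * c) * b.
Proof. by move=> Gb Gc; rewrite -mulrA (csaC Gb Gc) mulrA. Qed.

Record ksubring (R : U -> Prop) : Prop := KSubring {
  ksr_sub : forall x, R x -> G x;
  ksr0 : R 0; ksr1 : R 1;
  ksrD : forall x y, R x -> R y -> R (x + y);
  ksrN : forall x, R x -> R (- x);
  ksrM : forall x y, R x -> R y -> R (x * y);
  ksr_scalar : forall k : K, R (k *: 1) }.

Lemma ksubringT : ksubring G.
Proof.
split=> //; [exact: csa0|exact: csa1|exact: csaD|exact: csaN|exact: csaM|].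
by move=> k; apply: csaZ; apply: csa1.
Qed.

Section KSubring.
Variables (R : U -> Prop) (HR : ksubring R).

Lemma ksr_sum (I : Type) (r : seq I) (P : pred I) (F : I -> U) :
  (forall i, P i -> R (F i)) -> R (\sum_(i <- r | P i) F i).
Proof. by move=> H; apply: big_ind => //; [exact: (ksr0 HR) | exact: (ksrD HR)]. Qed.

Lemma ksrX x n : R x -> R (x ^+ n).
Proof.
move=> Rx; elim: n => [|n IH]; first by rewrite expr0; exact: (ksr1 HR).
by rewrite exprS; apply: (ksrM HR).
Qed.

Lemma ksrZ (k : K) x : R x -> R (k *: x).
Proof.
by move=> Rx; rewrite -[x]mul1r scalerAl; apply: (ksrM HR) => //; exact: (ksr_scalar HR).
Qed.

End KSubring.

Definition poly_over (R : U -> Prop) (p : {poly U}) := forall i, R p`_i.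

Definition adjoin (R : U -> Prop) (t : U) : U -> Prop :=
  fun x => exists p, poly_over R p /\ x = p.[t].

Section Adjoin.
Variables (R : U -> Prop) (HR : ksubring R) (t : U) (Gt : G t).

Lemma poly_over0 : poly_over R 0.
Proof. by move=> i; rewrite coef0; exact: (ksr0 HR). Qed.

Lemma poly_overC c : R c -> poly_over R c%:P.
Proof. by move=> Rc i; rewrite coefC; case: (i == 0)%N => //; exact: (ksr0 HR). Qed.

Lemma poly_overXn n : poly_over R 'X^n.
Proof. by move=> i; rewrite coefXn; case: (i == n)%N; [exact: (ksr1 HR)|exact: (ksr0 HR)]. Qed.

Lemma poly_overX : poly_over R 'X.
Proof. by have := poly_overXn 1; rewrite expr1. Qed.

Lemma poly_overD p q : poly_over R p -> poly_over R q -> poly_over R (p + q).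
Proof. by move=> Pp Pq i; rewrite coefD; apply: (ksrD HR). Qed.

Lemma poly_overN p : poly_over R p -> poly_over R (- p).
Proof. by move=> Pp i; rewrite coefN; apply: (ksrN HR). Qed.

Lemma poly_overB p q : poly_over R p -> poly_over R q -> poly_over R (p - q).
Proof. by move=> Pp Pq; apply: poly_overD => //; apply: poly_overN. Qed.

Lemma poly_overM p q : poly_over R p -> poly_over R q -> poly_over R (p * q).
Proof. by move=> Pp Pq i; rewrite coefM; apply: (ksr_sum HR) => j _; exact: (ksrM HR). Qed.

Lemma horner_poly_over p : poly_over R p -> G p.[t].
Proof.
move=> Pp; rewrite horner_coef; apply: (ksr_sum ksubringT) => i _.
by apply: csaM; [exact: (ksr_sub HR) | apply: (ksrX ksubringT)].
Qed.

Lemma hornerM_over p q : poly_over R q -> (p * q).[t] = p.[t] * q.[t].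
Proof. by move=> Pq; apply: hornerM_comm; apply: csaC => //; apply: horner_poly_over. Qed.

Lemma adjoin_ksubring : ksubring (adjoin R t).
Proof.
split.
- by move=> x [p [Pp ->]]; apply: horner_poly_over.
- by exists 0; rewrite horner0; split; first exact: poly_over0.
- by exists 1%:P; rewrite hornerC; split; first by apply: poly_overC; exact: (ksr1 HR).
- move=> _ _ [p [Pp ->]] [q [Pq ->]]; exists (p + q).
  by rewrite hornerD; split; first exact: poly_overD.
- move=> _ [p [Pp ->]]; exists (- p).
  by rewrite hornerN; split; first exact: poly_overN.
- move=> _ _ [p [Pp ->]] [q [Pq ->]]; exists (p * q).
  by rewrite hornerM_over //; split; first exact: poly_overM.
- move=> k; exists (k *: 1)%:P; rewrite hornerC.
  by split; first by apply: poly_overC; exact: (ksr_scalar HR).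
Qed.

Lemma adjoin_base r : R r -> adjoin R t r.
Proof. by move=> Rr; exists r%:P; rewrite hornerC; split; first exact: poly_overC. Qed.

Lemma adjoin_gen : adjoin R t t.
Proof. by exists 'X; rewrite hornerX; split; first exact: poly_overX. Qed.

End Adjoin.

(** * Noetherian subrings *)

Inductive lcomb (R : U -> Prop) (s : seq U) : U -> Prop :=
| lcomb0 : lcomb R s 0
| lcomb_gen a v : R a -> v \in s -> lcomb R s (a * v)
| lcombD x y : lcomb R s x -> lcomb R s y -> lcomb R s (x + y).

Lemma lcomb_subseq R (s1 s2 : seq U) x :
  {subset s1 <= s2} -> lcomb R s1 x -> lcomb R s2 x.
Proof.
move=> sub; elim=> [|a v Ra vs|y z _ IHy _ IHz]; first exact: lcomb0.
- by apply: lcomb_gen => //; apply: sub.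
- exact: lcombD.
Qed.

Lemma lcomb_subring (R R' : U -> Prop) s x :
  psub R R' -> lcomb R s x -> lcomb R' s x.
Proof.
move=> sub; elim=> [|a v Ra vs|y z _ IHy _ IHz]; first exact: lcomb0.
- by apply: lcomb_gen => //; apply: sub.
- exact: lcombD.
Qed.

Lemma lcomb_ideal R (J : U -> Prop) s x :
  idealG R J -> (forall v, v \in s -> J v) -> lcomb R s x -> J x.
Proof.
case=> _ J0 JD JM Hs; elim=> [|a v Ra vs|y z _ IHy _ IHz] //.
- by apply: JM => //; apply: Hs.
- exact: JD.
Qed.

Section Ideals.
Variables (R I : U -> Prop) (HI : idealG R I).

Lemma idG_sub x : I x -> R x. Proof. by case: HI => H _ _ _; apply: H. Qed.
Lemma idG0 : I 0. Proof. by case: HI. Qed.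
Lemma idGD x y : I x -> I y -> I (x + y). Proof. by case: HI => _ _ H _; apply: H. Qed.
Lemma idGM g x : R g -> I x -> I (g * x). Proof. by case: HI => _ _ _ H; apply: H. Qed.

Lemma idGN x : ksubring R -> I x -> I (- x).
Proof. by move=> HR Ix; rewrite -mulN1r; apply: idGM => //; apply: (ksrN HR); apply: (ksr1 HR). Qed.

End Ideals.

Definition noetherian (R : U -> Prop) := forall J, idealG R J ->
  exists s : seq U, (forall v, v \in s -> J v) /\ forall x, J x -> lcomb R s x.

End CommSubalg.

Lemma lift_map_seq (T T' : eqType) (f : T' -> T) (Q : T' -> Prop) (s : seq T) :
  (forall x, x \in s -> exists y, Q y /\ f y = x) ->
  exists ys, map f ys = s /\ forall y, y \in ys -> Q y.
Proof.
elim: s => [|x s IH] H; first by exists [::].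
have [y [Qy fy]] := H x (mem_head _ _).
have [ys [<- Qys]] : exists ys, map f ys = s /\ forall y, y \in ys -> Q y.
  by apply: IH => z zs; apply: H; rewrite in_cons zs orbT.
exists (y :: ys); split; first by rewrite /= fy.
by move=> z; rewrite in_cons => /orP [/eqP -> //|]; apply: Qys.
Qed.

Lemma bounded_nat_choice (T : Type) (d0 : T) N (Phi : nat -> T -> Prop) :
  (forall d, (d < N)%N -> exists y, Phi d y) ->
  exists f, forall d, (d < N)%N -> Phi d (f d).
Proof.
elim: N => [|N IH] H; first by exists (fun _ => d0).
have [f Hf] : exists f, forall d, (d < N)%N -> Phi d (f d).
  by apply: IH => d dN; apply: H; apply: ltnW.
have [y Hy] := H N (ltnSn N).
exists (fun d => if d == N then y else f d) => d; rewrite ltnS leq_eqVlt.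
by case: eqP => [-> //| _ /= dN]; apply: Hf.
Qed.

Lemma chain_bound (T : eqType) (C : nat -> T -> Prop) (s : seq T) :
  (forall n m x, (n <= m)%N -> C n x -> C m x) ->
  (forall v, v \in s -> exists n, C n v) -> exists N, forall v, v \in s -> C N v.
Proof.
move=> mono; elim: s => [|v s IH] Hs; first by exists 0%N.
have [n vn] := Hs v (mem_head _ _).
have [N HN] : exists N, forall w, w \in s -> C N w.
  by apply: IH => w ws; apply: Hs; rewrite in_cons ws orbT.
exists (maxn n N) => w; rewrite in_cons => /orP [/eqP ->|ws].
  by apply: mono vn; apply: leq_maxl.
by apply: mono (HN w ws); apply: leq_maxr.
Qed.

(** * Hilbert basis theorem *)

Lemma coefMXnD (R : nzSemiRingType) (p : {poly R}) d e : (p * 'X^e)`_(d + e) = p`_d.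
Proof. by rewrite coefMXn ltnNge leq_addl /= addnK. Qed.

Section HilbertBasis.
Variables (K : fieldType) (U : algType K) (G : U -> Prop).
Hypothesis HG : comm_subalg G.
Variables (R : U -> Prop) (HR : ksubring G R) (NR : noetherian R) (t : U) (Gt : G t).
Local Notation S := (adjoin R t).
Let HS : ksubring G S := adjoin_ksubring HG HR Gt.
Section AdjoinIdeal.
Variables (J : U -> Prop) (HJ : idealG S J).

Definition Jpoly d p := [/\ poly_over R p, (size p <= d.+1)%N & J p.[t]].

Definition lcoef_ideal d a := exists p, Jpoly d p /\ p`_d = a.

Lemma Jpoly0 d : Jpoly d 0.
Proof.
by split; [exact: (poly_over0 HR) | rewrite size_poly0 | rewrite horner0; exact: (idG0 HJ)].
Qed.

Lemma JpolyD d p q : Jpoly d p -> Jpoly d q -> Jpoly d (p + q).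
Proof.
case=> Pp sp Jp [Pq sq Jq]; split; first exact: (poly_overD HR).
  by apply: leq_trans (size_polyD _ _) _; rewrite geq_max sp.
by rewrite hornerD; apply: (idGD HJ).
Qed.

Lemma JpolyCM d r p : R r -> Jpoly d p -> Jpoly d (r%:P * p).
Proof.
move=> Rr [Pp sp Jp]; split; first by apply: (poly_overM HR) => //; apply: (poly_overC HR).
  by rewrite mul_polyC; apply: leq_trans (size_scale_leq _ _) _.
by rewrite hornerCM; apply: (idGM HJ) => //; exact: (adjoin_base HR).
Qed.

Lemma JpolyMXn d e p : Jpoly d p -> Jpoly (d + e) (p * 'X^e).
Proof.
move=> [Pp sp Jp]; split; first by apply: (poly_overM HR) => //; apply: (poly_overXn HR).
  apply: leq_trans (size_polyMleq _ _) _.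
  by rewrite size_polyXn addnS /= -addSn leq_add2r.
rewrite (hornerM_over HG HR Gt) ?hornerXn; last exact: (poly_overXn HR).
rewrite (csaC HG (horner_poly_over HG HR Gt Pp)); last exact: (ksrX (ksubringT HG)).
by apply: (idGM HJ) => //; apply: (ksrX HS); exact: (adjoin_gen HR).
Qed.

Lemma lcoef_ideal_ideal d : idealG R (lcoef_ideal d).
Proof.
split.
- by move=> _ [p [[Pp _ _] <-]].
- by exists 0; split; [exact: Jpoly0 | rewrite coef0].
- by move=> _ _ [p [Jp <-]] [q [Jq <-]]; exists (p + q); rewrite coefD; split; first exact: JpolyD.
- by move=> g _ Rg [p [Jp <-]]; exists (g%:P * p); rewrite coefCM; split; first exact: JpolyCM.
Qed.

Lemma lcoef_ideal_mono d e a : (d <= e)%N -> lcoef_ideal d a -> lcoef_ideal e a.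
Proof.
move=> /subnKC <- [p [Jp <-]]; exists (p * 'X^(e - d)).
by rewrite coefMXnD; split; first exact: JpolyMXn.
Qed.

Definition lcoef_union a := exists d, lcoef_ideal d a.

Lemma lcoef_union_ideal : idealG R lcoef_union.
Proof.
split.
- by move=> x [d /(idG_sub (lcoef_ideal_ideal d))].
- by exists 0%N; exact: (idG0 (lcoef_ideal_ideal 0)).
- move=> x y [d Hx] [e Hy]; exists (maxn d e); apply: (idGD (lcoef_ideal_ideal _)).
    by apply: lcoef_ideal_mono Hx; apply: leq_maxl.
  by apply: lcoef_ideal_mono Hy; apply: leq_maxr.
- by move=> g x Rg [d Hx]; exists d; apply: (idGM (lcoef_ideal_ideal d)).
Qed.

Lemma lift_lcomb D (qs : seq {poly U}) (Jqs : forall q, q \in qs -> Jpoly D q) e a :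
  lcomb R (map (fun q : {poly U} => q`_D) qs) a ->
  exists Q, [/\ Jpoly (D + e) Q, Q`_(D + e) = a &
                lcomb S (map (horner^~ t) qs) Q.[t]].
Proof.
elim=> [|r _ Rr /mapP [q qqs ->]|x y _ [Q1 [J1 c1 l1]] _ [Q2 [J2 c2 l2]]].
- by exists 0; rewrite coef0 horner0; split; [exact: Jpoly0 | | exact: lcomb0].
- have Jq := Jqs q qqs; exists (r%:P * (q * 'X^e)).
  rewrite coefCM coefMXnD; split => //; first by apply: JpolyCM => //; apply: JpolyMXn.
  have [Pq _ _] := Jq.
  rewrite hornerCM (hornerM_over HG HR Gt) ?hornerXn; last exact: (poly_overXn HR).
  rewrite (csaC HG (horner_poly_over HG HR Gt Pq)); last exact: (ksrX (ksubringT HG)).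
  rewrite mulrA; apply: lcomb_gen; last exact: map_f.
  by apply: (ksrM HS); [exact: (adjoin_base HR) | apply: (ksrX HS); exact: (adjoin_gen HR)].
- exists (Q1 + Q2); rewrite coefD c1 c2 hornerD.
  by split => //; [exact: JpolyD | exact: lcombD].
Qed.

Section Reduction.
Variables (N : nat) (L : nat -> seq {poly U}).
Hypotheses (JL : forall d, (d <= N)%N -> forall q, q \in L d -> Jpoly d q)
  (L_gen : forall d a, lcoef_ideal d a ->
     lcomb R (map (fun q : {poly U} => q`_(minn d N)) (L (minn d N))) a).

Let gens := flatten [seq map (horner^~ t) (L d) | d <- iota 0 N.+1].

Lemma gens_in_J v : v \in gens -> J v.
Proof.
case/flatten_mapP => d; rewrite mem_iota add0n ltnS => dN /mapP [q qL ->].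
by have [] := JL dN qL.
Qed.

(* Induction on the degree: the top coefficient is cancelled by an [S]-combination
   of the generators lifted from the matching leading-coefficient ideal. *)
Lemma Jpoly_lcomb n p : poly_over R p -> (size p <= n)%N -> J p.[t] -> lcomb S gens p.[t].
Proof.
elim: n p => [|d IH] p Pp sp Jp.
  by move: sp; rewrite leqn0 size_poly_eq0 => /eqP ->; rewrite horner0; exact: lcomb0.
have [Q [[PQ sQ JQ] cQ lQ]] : exists Q, [/\ Jpoly d Q, Q`_d = p`_d & lcomb S gens Q.[t]].
  have Ld : lcoef_ideal d p`_d by exists p.
  have dN : (minn d N <= N)%N by exact: geq_minr.
  have [Q [JQ cQ lQ]] := lift_lcomb (JL dN) (d - minn d N) (L_gen Ld).
  rewrite subnKC ?geq_minl // in JQ cQ; exists Q; split => //.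
  apply: lcomb_subseq lQ => v vL; apply/flatten_mapP; exists (minn d N) => //.
  by rewrite mem_iota add0n ltnS.
have -> : p.[t] = (p - Q).[t] + Q.[t] by rewrite hornerD hornerN addrNK.
apply: lcombD => //; apply: IH.
- exact: (poly_overB HR).
- apply/leq_sizeP => j; rewrite leq_eqVlt => /orP [/eqP <-|dj].
    by rewrite coefB cQ subrr.
  by rewrite coefB (leq_sizeP _ _ sp j dj) (leq_sizeP _ _ sQ j dj) subr0.
- by rewrite hornerD hornerN; apply: (idGD HJ) => //; apply: (idGN HJ HS).
Qed.

End Reduction.

Lemma adjoin_ideal_fin_gen :
  exists s : seq U, (forall v, v \in s -> J v) /\ forall x, J x -> lcomb S s x.
Proof.
have [gsU [gsU_in gsU_gen]] := NR lcoef_union_ideal.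
have [N HN] := chain_bound (fun n m x => @lcoef_ideal_mono n m x) gsU_in.
(* From degree [N] on, the generators of the union of the leading-coefficient
   ideals, all reached at degree [N], serve for every degree. *)
pose Ld d a := if (d < N)%N then lcoef_ideal d a else lcoef_union a.
pose Lspec d (qs : seq {poly U}) := (forall q, q \in qs -> Jpoly d q) /\
  forall a, Ld d a -> lcomb R (map (fun q : {poly U} => q`_d) qs) a.
have [L HL] : exists L, forall d, (d < N.+1)%N -> Lspec d (L d).
  apply: (bounded_nat_choice [::]) => d; rewrite ltnS leq_eqVlt => /orP [/eqP ->|dN].
    have [qs [qs_gs Jqs]] := lift_map_seq HN.
    by exists qs; split => // a; rewrite /Ld ltnn qs_gs; apply: gsU_gen.
  have [gs [gs_in gs_gen]] := NR (lcoef_ideal_ideal d).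
  have [qs [qs_gs Jqs]] := lift_map_seq gs_in.
  by exists qs; split => // a; rewrite /Ld dN qs_gs; apply: gs_gen.
have JL d : (d <= N)%N -> forall q, q \in L d -> Jpoly d q by move=> dN; case: (HL d dN).
have L_gen d a : lcoef_ideal d a ->
    lcomb R (map (fun q : {poly U} => q`_(minn d N)) (L (minn d N))) a.
  have [dN|Nd] := ltnP d N.
    by move=> Lda; apply: (HL d (ltnW dN)).2; rewrite /Ld dN.
  move=> Lda; apply: (HL N (leqnn _)).2.
  by rewrite /Ld ltnn; exists d.
exists (flatten [seq map (horner^~ t) (L d) | d <- iota 0 N.+1]); split.
  exact: gens_in_J JL.
move=> x Jx; have [p [Pp xp]] := idG_sub HJ Jx.
by rewrite xp in Jx *; apply: (Jpoly_lcomb JL L_gen Pp (leqnn _)).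
Qed.

End AdjoinIdeal.

Lemma noetherian_adjoin : noetherian S.
Proof. by move=> J HJ; apply: adjoin_ideal_fin_gen. Qed.

End HilbertBasis.

Section Noetherian.
Variables (K : fieldType) (U : algType K).

Lemma noetherian_ext (R R' : U -> Prop) :
  (forall x, R x <-> R' x) -> noetherian R -> noetherian R'.
Proof.
move=> RR' NR J [JR J0 JD JM].
have [|s [sJ sR]] := NR J; first by split=> // [x /JR /RR' | g x /RR'] //; apply: JM.
by exists s; split=> // x /sR; apply: lcomb_subring => y /RR'.
Qed.

Variables (G : U -> Prop) (HG : comm_subalg G).

Definition scalars : U -> Prop := fun x => exists k : K, x = k *: 1.

Lemma ksubring_scalars : ksubring G scalars.
Proof.
split.
- by move=> _ [k ->]; apply: (csaZ HG); apply: (csa1 HG).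
- by exists 0; rewrite scale0r.
- by exists 1; rewrite scale1r.
- by move=> _ _ [a ->] [b ->]; exists (a + b); rewrite scalerDl.
- by move=> _ [a ->]; exists (- a); rewrite scaleNr.
- by move=> _ _ [a ->] [b ->]; exists (a * b); rewrite -scalerAl mul1r scalerA.
- by move=> k; exists k.
Qed.

(* An ideal of the field [K 1] is either [0] or generated by [1]. *)
Lemma noetherian_scalars : noetherian scalars.
Proof.
move=> J HJ; have [[x [Jx x0]]|J0] := classic (exists x, J x /\ x != 0).
  have [k xk] := idG_sub HJ Jx.
  have k0 : k != 0 by apply: contraNneq x0 => k0; rewrite xk k0 scale0r.
  exists [:: 1]; split=> [v|y Jy].
    rewrite mem_seq1 => /eqP ->.
    have -> : (1 : U) = (k^-1 *: 1) * x by rewrite xk -scalerAl mul1r scalerA mulVf // scale1r.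
    by apply: (idGM HJ) => //; exists k^-1.
  rewrite -[y]mulr1; apply: lcomb_gen; last by rewrite mem_seq1.
  exact: (idG_sub HJ).
exists [::]; split=> // y Jy.
have -> : y = 0 by apply: NNPP => ny; apply: J0; exists y; split => //; apply/eqP.
exact: lcomb0.
Qed.

Definition adjoin_seq (l : seq U) : U -> Prop := foldr (fun t R => adjoin R t) scalars l.

Lemma adjoin_seq_spec l : (forall t, t \in l -> G t) ->
  [/\ ksubring G (adjoin_seq l), noetherian (adjoin_seq l)
    & forall t, t \in l -> adjoin_seq l t].
Proof.
elim: l => [|t l IH] Hl.
  by split => //; [exact: ksubring_scalars | exact: noetherian_scalars].
have Gt : G t by apply: Hl; apply: mem_head.
have [HR NR inl] : [/\ ksubring G (adjoin_seq l), noetherian (adjoin_seq l)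
                      & forall t, t \in l -> adjoin_seq l t].
  by apply: IH => x xl; apply: Hl; rewrite in_cons xl orbT.
split => /=; [exact: (adjoin_ksubring HG HR Gt) | exact: (noetherian_adjoin HG HR NR Gt) |].
move=> x; rewrite in_cons => /orP [/eqP ->|xl]; first exact: (adjoin_gen HR).
by apply: (adjoin_base HR); apply: inl.
Qed.

Lemma noetherian_fin_gen (s : seq U) : (forall x, x \in s -> G x) ->
  (forall g, G g -> subalg_gen (fun x => x \in s) g) -> noetherian G.
Proof.
move=> sG gen; have [HR NR ins] := adjoin_seq_spec sG.
apply: noetherian_ext NR => x; split; first exact: (ksr_sub HR).
move=> /gen; elim => {x} [x xs||||].
- exact: ins.
- exact: (ksr1 HR).
- by move=> x y _ ? _ ?; apply: (ksrD HR).
- by move=> x y _ ? _ ?; apply: (ksrM HR).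
- by move=> k x _ ?; apply: (ksrZ HR).
Qed.

End Noetherian.

Section AscendingChains.
Variables (K : fieldType) (U : algType K) (R : U -> Prop) (NR : noetherian R).

Lemma noetherian_chain_stationary (ch : nat -> U -> Prop) :
  (forall n, idealG R (ch n)) -> (forall n, psub (ch n) (ch n.+1)) ->
  exists N, psub (ch N.+1) (ch N).
Proof.
move=> Ich inc.
have mono n m x : (n <= m)%N -> ch n x -> ch m x.
  move=> /subnKC <-; elim: (m - n)%N => [|k IH]; first by rewrite addn0.
  by rewrite addnS => /IH /inc.
pose Un x := exists n, ch n x.
have IUn : idealG R Un.
  split.
  - by move=> x [n /(idG_sub (Ich n))].
  - by exists 0%N; exact: (idG0 (Ich 0%N)).
  - move=> x y [n xn] [m ym]; exists (maxn n m); apply: (idGD (Ich _)).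
      by apply: mono xn; apply: leq_maxl.
    by apply: mono ym; apply: leq_maxr.
  - by move=> g x Rg [n xn]; exists n; apply: (idGM (Ich n)).
have [s [sUn Un_s]] := NR IUn.
have [N HN] := chain_bound mono sUn.
exists N => x xN1; apply: lcomb_ideal (Ich N) HN _.
by apply: Un_s; exists N.+1.
Qed.

Definition maximal_in (F : (U -> Prop) -> Prop) (I : U -> Prop) :=
  F I /\ forall J, F J -> psub I J -> psub J I.

Lemma noetherian_maximal (F : (U -> Prop) -> Prop) :
  (forall I, F I -> idealG R I) -> (exists I, F I) -> exists I, maximal_in F I.
Proof.
move=> FI [I0 FI0]; apply: NNPP => nomax.
have [nx nxP] : exists nx : (U -> Prop) -> U -> Prop, forall I,
    F I -> [/\ F (nx I), psub I (nx I) & ~ psub (nx I) I].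
  apply: (choice (fun I J => F I -> [/\ F J, psub I J & ~ psub J I])) => I.
  have [FIx|] := classic (F I); last by exists I.
  have [J notJI] : exists J, ~ (F J -> psub I J -> psub J I).
    by apply: not_all_ex_not => maxI; apply: nomax; exists I.
  have IJ := not_imply_elim2 _ _ notJI.
  by exists J => _; split; [exact: (not_imply_elim _ _ notJI) | exact: (not_imply_elim _ _ IJ) |
                           exact: (not_imply_elim2 _ _ IJ)].
pose ch n := iter n nx I0.
have Fch n : F (ch n) by elim: n => //= n IH; case: (nxP _ IH).
have inc n : psub (ch n) (ch n.+1) by case: (nxP _ (Fch n)).
have [N stat] := noetherian_chain_stationary (fun n => FI _ (Fch n)) inc.
by case: (nxP _ (Fch N)).
Qed.

End AscendingChains.

Section MaximalIdeals.
Variables (K : fieldType) (U : algType K) (G : U -> Prop).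
Hypothesis HG : comm_subalg G.

Definition ideal_sum (I J : U -> Prop) (y : U) := exists a b, [/\ I a, J b & y = a + b].

Lemma ideal_sum_ideal I J : idealG G I -> idealG G J -> idealG G (ideal_sum I J).
Proof.
move=> HI HJ; split.
- by move=> _ [a [b [Ia Jb ->]]]; apply: (csaD HG); [exact: (idG_sub HI) | exact: (idG_sub HJ)].
- by exists 0, 0; rewrite addr0; split; [exact: (idG0 HI) | exact: (idG0 HJ)|].
- move=> _ _ [a1 [b1 [I1 J1 ->]]] [a2 [b2 [I2 J2 ->]]].
  by exists (a1 + a2), (b1 + b2); rewrite addrACA; split; [exact: (idGD HI) | exact: (idGD HJ)|].
- move=> g _ Gg [a [b [Ia Jb ->]]].
  by exists (g * a), (g * b); rewrite mulrDr; split; [exact: (idGM HI) | exact: (idGM HJ)|].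
Qed.

Lemma ideal_suml I J a : idealG G J -> I a -> ideal_sum I J a.
Proof. by move=> HJ Ia; exists a, 0; rewrite addr0; split => //; exact: (idG0 HJ). Qed.

Lemma ideal_sumr I J b : idealG G I -> J b -> ideal_sum I J b.
Proof. by move=> HI Jb; exists 0, b; rewrite add0r; split => //; exact: (idG0 HI). Qed.

Definition proper_above (I0 J : U -> Prop) := [/\ idealG G J, ~ J 1 & psub I0 J].

(* If [a] is outside the maximal [mm] then [mm + a G] contains [1],
   so [b = b 1] lies in [mm + a b G]. *)
Lemma maximal_proper_prime I0 mm : maximal_in (proper_above I0) mm -> primeG G mm.
Proof.
move=> [[Imm n1 sI0] maxm]; split => // a b Ga Gb mab.
have [|na] := classic (mm a); [by left | right].
pose aG y := exists h, G h /\ y = a * h.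
have IaG : idealG G aG.
  split.
  - by move=> _ [h [Gh ->]]; exact: (csaM HG).
  - by exists 0; rewrite mulr0; split; first exact: (csa0 HG).
  - move=> _ _ [h [Gh ->]] [h' [Gh' ->]]; exists (h + h').
    by rewrite mulrDr; split; first exact: (csaD HG).
  - move=> k _ Gk [h [Gh ->]]; exists (k * h); split; first exact: (csaM HG).
    by rewrite (csa_mulrCA HG _ Gk Ga).
have [[y0 [_ [my0 [h [Gh ->]] e]]]|n1'] := classic (ideal_sum mm aG 1).
  rewrite -[b]mulr1 e mulrDr; apply: (idGD Imm); first exact: (idGM Imm).
  by rewrite mulrA (csaC HG Gb Ga) (csaC HG (csaM HG Ga Gb) Gh); apply: (idGM Imm).
have Pm' : proper_above I0 (ideal_sum mm aG).
  by split => // [|y /sI0]; [exact: ideal_sum_ideal | exact: ideal_suml].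
case: na; apply: (maxm _ Pm' (fun y => ideal_suml IaG)).
exists 0, a; rewrite add0r; split => //; first exact: (idG0 Imm).
by exists 1; rewrite mulr1; split; first exact: (csa1 HG).
Qed.

End MaximalIdeals.

(** * Associated primes *)

Section Primes.
Variables (K : fieldType) (U : algType K) (G P : U -> Prop) (HP : primeG G P).

Lemma prime_ideal : idealG G P. Proof. by case: HP. Qed.
Lemma prime_not1 : ~ P 1. Proof. by case: HP. Qed.

Lemma prime_nmul a b : G a -> G b -> ~ P a -> ~ P b -> ~ P (a * b).
Proof. by case: HP => _ _ H Ga Gb na nb /(H _ _ Ga Gb) []. Qed.

Lemma coheight_sub_eq (Q : U -> Prop) n :
  coheight G Q n -> coheight G P n -> psub Q P -> psub P Q.
Proof.
case: n => [|j] [ZQ nQ] [ZP nP] QP.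
  by case: ZQ HP => _ _ maxQ [IP P1 _]; apply: maxQ.
case: ZQ => [ZQ|[_ _ minQ]]; first by case: (nQ j (ltnSn j)).
exact: minQ HP (nP j (ltnSn j)) QP.
Qed.

End Primes.

Section AssociatedPrimes.
Variables (K : fieldType) (U : algType K) (G : U -> Prop).
Hypotheses (HG : comm_subalg G) (NG : noetherian G).
Variable M : lmodType U.

Lemma csa_scalerC a b (z : M) : G a -> G b -> a *: (b *: z) = b *: (a *: z).
Proof. by move=> Ga Gb; rewrite !scalerA (csaC HG Ga Gb). Qed.

Definition annG (v : M) (a : U) := G a /\ a *: v = 0.

Lemma annG_ideal v : idealG G (annG v).
Proof.
split.
- by move=> x [].
- by split; [exact: (csa0 HG) | rewrite scale0r].
- by move=> x y [Gx xv] [Gy yv]; split; [exact: (csaD HG) | rewrite scalerDl xv yv addr0].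
- by move=> g x Gg [Gx xv]; split; [exact: (csaM HG) | rewrite -scalerA xv scaler0].
Qed.

Lemma Gcyc_scale g (y z : M) : G g -> Gcyc G (g *: y) z -> Gcyc G y z.
Proof.
by move=> Gg [h [Gh ->]]; exists (h * g); rewrite scalerA; split; first exact: (csaM HG).
Qed.

Lemma Ass_sub (N N' : M -> Prop) Q : (forall z, N z -> N' z) -> Ass G N Q -> Ass G N' Q.
Proof. by move=> NN' [HQ [z [Nz Qz]]]; split => //; exists z; split => //; apply: NN'. Qed.

Lemma Ass_ext (N : M -> Prop) P Q : (forall a, P a <-> Q a) -> Ass G N Q -> Ass G N P.
Proof.
move=> PQ [[[QG Q0 QD QM] Q1 Qmul] [z [Nz Qz]]]; split; last first.
  by exists z; split => // a; rewrite PQ.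
split; [split | |] => [x /PQ /QG|| x y /PQ Px /PQ Py| g x Gg /PQ Px|/PQ|a b Ga Gb /PQ] //.
- exact/PQ.
- by apply/PQ; apply: QD.
- by apply/PQ; apply: QM.
- by case/(Qmul _ _ Ga Gb) => /PQ; [left | right].
Qed.

Section Localization.
Variables (P : U -> Prop) (HP : primeG G P).

(* [ann_loc v] is the annihilator of [v / 1] in the localization at [P]. *)
Definition ann_loc (v : M) (a : U) := G a /\ exists c, [/\ G c, ~ P c & (c * a) *: v = 0].

Lemma ann_loc_ideal v : idealG G (ann_loc v).
Proof.
split.
- by move=> x [].
- split; first exact: (csa0 HG).
  by exists 1; split; [exact: (csa1 HG) | exact: (prime_not1 HP) | rewrite mulr0 scale0r].
- move=> x y [Gx [c1 [Gc1 nc1 e1]]] [Gy [c2 [Gc2 nc2 e2]]].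
  split; first exact: (csaD HG).
  exists (c1 * c2); split; [exact: (csaM HG) | exact: (prime_nmul HP)|].
  rewrite mulrDr scalerDl (csaC HG Gc1 Gc2) -!mulrA -!scalerA.
  rewrite -scalerA in e1; rewrite -scalerA in e2.
  by rewrite e1 scaler0 add0r (csa_scalerC _ Gc2 Gc1) e2 !scaler0.
- move=> g x Gg [Gx [c [Gc nc e]]]; split; first exact: (csaM HG).
  by exists c; split => //; rewrite (csa_mulrCA HG _ Gc Gg) -scalerA e scaler0.
Qed.

Lemma ann_loc_realized v :
  exists c, [/\ G c, ~ P c & forall a, ann_loc v a <-> annG (c *: v) a].
Proof.
pose F I := exists c, [/\ G c, ~ P c & I = annG (c *: v)].
have [_ [[c1 [Gc1 nc1 ->]] max1]] : exists I, maximal_in F I.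
  apply: (noetherian_maximal NG); first by move=> I [c [_ _ ->]]; apply: annG_ideal.
  by exists (annG (1 *: v)), 1; split => //; [exact: (csa1 HG) | exact: (prime_not1 HP)].
exists c1; split => // a; split.
- move=> [Ga [d [Gd nd e]]].
  have Fdc1 : F (annG ((d * c1) *: v)).
    by exists (d * c1); split => //; [exact: (csaM HG) | exact: (prime_nmul HP)].
  apply: (max1 _ Fdc1) => [x [Gx e2]|]; split => //.
    by rewrite scalerA mulrA (csaC HG Gx Gd) -mulrA -scalerA -scalerA e2 scaler0.
  by rewrite scalerA (csaC HG Gd Gc1) (csa_mulrCA HG _ Ga Gc1) (csaC HG Ga Gd) -scalerA e scaler0.
- by move=> [Ga e]; split => //; exists c1; split => //; rewrite (csaC HG Gc1 Ga) -scalerA.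
Qed.

Variables (w : M) (annwP : psub (annG w) P).

(* Take [g] with [ann_loc (g w)] maximal among proper ones. *)
Lemma ann_loc_max_prime :
  exists g, [/\ G g, primeG G (ann_loc (g *: w)) & psub (ann_loc (g *: w)) P].
Proof.
pose F I := exists g, [/\ G g, I = ann_loc (g *: w) & ~ ann_loc (g *: w) 1].
have [_ [[g0 [Gg0 -> n1]] maxI]] : exists I, maximal_in F I.
  apply: (noetherian_maximal NG); first by move=> I [g [_ -> _]]; apply: ann_loc_ideal.
  exists (ann_loc (1 *: w)), 1; split => //; first exact: (csa1 HG).
  move=> [_ [c [Gc nc e]]]; apply: nc; apply: annwP; split => //.
  by move: e; rewrite mulr1 scale1r.
exists g0; split => //.
  split; [exact: ann_loc_ideal | exact: n1|] => a b Ga Gb Qab.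
  have [|na] := classic (ann_loc (g0 *: w) a); [by left | right].
  have Fa : F (ann_loc ((a * g0) *: w)).
    exists (a * g0); split => //; first exact: (csaM HG).
    move=> [_ [c [Gc nc e]]]; apply: na; split => //.
    by exists c; split => //; move: e; rewrite mulr1 !scalerA mulrA.
  apply: (maxI _ Fa) => [x [Gx [c [Gc nc e]]]|].
    split => //; exists c; split => //.
    by rewrite -[(a * g0) *: w]scalerA (csa_scalerC _ (csaM HG Gc Gx) Ga) e scaler0.
  case: Qab => _ [c [Gc nc e]]; split => //; exists c; split => //.
  by rewrite -[(a * g0) *: w]scalerA scalerA -mulrA (csaC HG Gb Ga).
move=> a [Ga [c [Gc nc e]]]; apply: NNPP => na; apply: n1; split; first exact: (csa1 HG).
by exists (c * a); split; [exact: (csaM HG) | exact: (prime_nmul HP) | rewrite mulr1].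
Qed.

Lemma ass_prime_below : exists Q, Ass G (Gcyc G w) Q /\ psub Q P.
Proof.
have [g0 [Gg0 Qprime QP]] := ann_loc_max_prime.
have [c [Gc _ Qc]] := ann_loc_realized (g0 *: w).
exists (ann_loc (g0 *: w)); split => //; split => //.
exists ((c * g0) *: w); rewrite -scalerA; split => //.
by exists (c * g0); split; [exact: (csaM HG) | rewrite scalerA].
Qed.

End Localization.

Lemma Ass_Gcyc_of_multiple (x z : M) P h k : primeG G P -> (forall a, P a <-> annG z a) ->
  G h -> G k -> h *: z = k *: x -> h *: z != 0 -> Ass G (Gcyc G x) P.
Proof.
move=> HP Pz Gh Gk hk hz0; split => //; exists (k *: x); split; first by exists k.
have nPh : ~ P h by move=> /Pz [_ hz]; rewrite hz eqxx in hz0.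
move=> a; split => [Pa|[Ga e]].
  have Ga := idG_sub (prime_ideal HP) Pa; split => //.
  rewrite -hk scalerA; suff [] : annG z (a * h) by [].
  by apply/Pz; rewrite (csaC HG Ga Gh); apply: (idGM (prime_ideal HP)).
have : P (a * h) by apply/Pz; split; [exact: (csaM HG) | rewrite -scalerA hk].
by case: HP => _ _ Hmul /(Hmul _ _ Ga Gh) [].
Qed.

Lemma Ass_Gcyc_add : (exists n, forall P, Ass G (fun _ : M => True) P -> coheight G P n) ->
  forall (x y : M) P, Ass G (Gcyc G (x + y)) P -> Ass G (Gcyc G x) P \/ Ass G (Gcyc G y) P.
Proof.
move=> [n coh] x y P AP; have [HP [z [[g [Gg zE]] Pz]]] := AP.
have [[h [k [Gh Gk hk hz0]]]|nomult] :=
    classic (exists h k, [/\ G h, G k, h *: z = k *: x & h *: z != 0]).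
  by left; apply: (Ass_Gcyc_of_multiple HP Pz Gh Gk hk hz0).
right.
(* if [s g y = 0] then [s z = s g x] lies in [G x], hence vanishes *)
have annP : psub (annG (g *: y)) P.
  move=> s [Gs sgy]; apply/Pz; split => //; apply: NNPP => sz; apply: nomult.
  exists s, (s * g); split => //; first exact: (csaM HG).
    by rewrite zE scalerDr scalerDr sgy addr0 scalerA.
  exact/eqP.
have [Q [AQ QP]] := ass_prime_below HP annP.
have PQ := coheight_sub_eq HP (coh _ (Ass_sub (fun _ _ => I) AQ))
                              (coh _ (Ass_sub (fun _ _ => I) AP)) QP.
apply: (Ass_sub (fun _ => Gcyc_scale (y := y) Gg)).
by apply: Ass_ext AQ => a; split; [apply: PQ | apply: QP].
Qed.

End AssociatedPrimes.

(** * Nakayama's lemma *)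

Section Nakayama.
Variables (K : fieldType) (U : algType K) (G : U -> Prop).
Hypothesis HG : comm_subalg G.
Variables (V : zmodType) (act : U -> V -> V) (W : V -> Prop) (m : U -> Prop).
Hypotheses (actDr : forall a v w, act a (v + w) = act a v + act a w)
  (actDl : forall a b v, act (a + b) v = act a v + act b v)
  (actM : forall a b v, G a -> G b -> act (a * b) v = act a (act b v))
  (W0 : W 0) (WD : forall v w, W v -> W w -> W (v + w))
  (Wact : forall a v, G a -> W v -> W (act a v))
  (Hm : idealG G m).

Lemma act0r a : act a 0 = 0.
Proof. by apply: (addrI (act a 0)); rewrite -actDr !addr0. Qed.

Lemma actNr a v : act a (- v) = - act a v.
Proof. by apply/eqP; rewrite -subr_eq0 opprK -actDr addNr act0r. Qed.

Lemma act0l v : act 0 v = 0.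
Proof. by apply: (addrI (act 0 v)); rewrite -actDl !addr0. Qed.

Lemma actNl a v : act (- a) v = - act a v.
Proof. by apply/eqP; rewrite -subr_eq0 opprK -actDl addNr act0l. Qed.

Lemma actC a b v : G a -> G b -> act a (act b v) = act b (act a v).
Proof. by move=> Ga Gb; rewrite -!actM // (csaC HG Ga Gb). Qed.

Inductive mspan (k : nat) (vs : nat -> V) : V -> Prop :=
| mspanW y : W y -> mspan k vs y
| mspan_gen a j : m a -> (j < k)%N -> mspan k vs (act a (vs j))
| mspanD y z : mspan k vs y -> mspan k vs z -> mspan k vs (y + z).

Lemma mspan0 k vs : mspan k vs 0. Proof. exact: mspanW. Qed.

Lemma mspan_act k vs b y : G b -> mspan k vs y -> mspan k vs (act b y).
Proof.
move=> Gb; elim=> [z Wz|a j ma jk|y1 y2 _ IH1 _ IH2].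
- by apply: mspanW; apply: Wact.
- by rewrite -actM //; [apply: mspan_gen => //; apply: (idGM Hm) | apply: (idG_sub Hm)].
- by rewrite actDr; apply: mspanD.
Qed.

Lemma mspan_sum k vs n (F : 'I_n -> V) :
  (forall j, mspan k vs (F j)) -> mspan k vs (\sum_(j < n) F j).
Proof. by move=> H; apply: big_ind => //; [exact: mspan0 | exact: mspanD]. Qed.

Lemma mspan_last k vs y : mspan k.+1 vs y -> exists a, m a /\ mspan k vs (y - act a (vs k)).
Proof.
elim=> [z Wz|a j ma jk|y1 y2 _ [a1 [m1 H1]] _ [a2 [m2 H2]]].
- by exists 0; split; [exact: (idG0 Hm) | rewrite act0l subr0; apply: mspanW].
- move: jk; rewrite ltnS leq_eqVlt => /orP [/eqP ->|jk].
    by exists a; split => //; rewrite subrr; apply: mspan0.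
  by exists 0; split; [exact: (idG0 Hm) | rewrite act0l subr0; apply: mspan_gen].
- exists (a1 + a2); split; first exact: (idGD Hm).
  by rewrite actDl opprD addrACA; apply: mspanD.
Qed.

Lemma mspan_shift k vs s y : G s -> mspan k vs y -> mspan k (fun j => act s (vs j)) (act s y).
Proof.
move=> Gs; elim=> [z Wz|a j ma jk|y1 y2 _ IH1 _ IH2].
- by apply: mspanW; apply: Wact.
- by rewrite actC //; [apply: mspan_gen | apply: (idG_sub Hm)].
- by rewrite actDr; apply: mspanD.
Qed.

Lemma mspan_kill k vs c y : G c -> (forall j, (j < k)%N -> W (act c (vs j))) ->
  mspan k vs y -> W (act c y).
Proof.
move=> Gc Hc; elim=> [z Wz|a j ma jk|y1 y2 _ IH1 _ IH2].
- exact: Wact.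
- by rewrite actC //; [apply: Wact; [apply: (idG_sub Hm) | apply: Hc] | apply: (idG_sub Hm)].
- by rewrite actDr; apply: WD.
Qed.

(* Induction on the number of generators: the last one is eliminated by
   rescaling all generators with [s = t - a], where [t vs_k = a vs_k mod mspan k]. *)
Lemma nakayama k : forall (vs : nat -> V) t, G t -> m (1 - t) ->
  (forall i, (i < k)%N -> mspan k vs (act t (vs i))) ->
  exists c, [/\ G c, m (1 - c) & forall i, (i < k)%N -> W (act c (vs i))].
Proof.
elim: k => [|k IH] vs t Gt mt H.
  by exists 1; split => //; [exact: (csa1 HG) | rewrite subrr; exact: (idG0 Hm)].
have [a [ma Ha]] := mspan_last (H k (ltnSn k)).
have Ga := idG_sub Hm ma.
set s := t - a.
have Gs : G s by apply: (csaB HG).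
have ms : m (1 - s) by rewrite /s opprB addrCA; apply: (idGD Hm).
have Ek : mspan k vs (act s (vs k)) by rewrite /s actDl actNl.
clearbody s.
pose vs' j := act s (vs j).
have Hvs' i : (i < k)%N -> mspan k vs' (act (s * t) (vs' i)).
  move=> ik; have [b [mb Hb]] := mspan_last (H i (ltnW ik)).
  have Gb := idG_sub Hm mb.
  have Hst : mspan k vs (act s (act t (vs i))).
    have -> : act s (act t (vs i)) = act s (act t (vs i) - act b (vs k)) + act b (act s (vs k)).
      by rewrite actDr actNr (actC _ Gb Gs) subrK.
    by apply: mspanD; apply: mspan_act.
  by rewrite /vs' actM // (actC _ Gt Gs); apply: mspan_shift.
have mst : m (1 - s * t).
  have -> : 1 - s * t = (1 - s) + s * (1 - t) by rewrite mulrBr mulr1 addrA addrNK.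
  by apply: (idGD Hm) => //; apply: (idGM Hm).
have [c' [Gc' mc' Hc']] := IH vs' (s * t) (csaM HG Gs Gt) mst Hvs'.
have Gss := csaM HG Gs Gs.
exists (c' * (s * s)); split; first exact: (csaM HG).
  have -> : 1 - c' * (s * s) = (1 - c') + (c' * (1 - s) + (c' * s) * (1 - s)).
    by rewrite !mulrBr !mulr1 mulrA [c' - _ + _]addrA subrK [1 - c' + _]addrA subrK.
  apply: (idGD Hm) => //; apply: (idGD Hm); first exact: (idGM Hm).
  exact: (idGM Hm (csaM HG Gc' Gs) ms).
move=> i; rewrite (actM _ Gc' Gss) (actM _ Gs Gs) ltnS leq_eqVlt => /orP [/eqP ->|ik].
  exact: mspan_kill Gc' Hc' (mspan_shift Gs Ek).
by rewrite (actC _ Gc' Gs); apply: Wact => //; apply: Hc'.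
Qed.

End Nakayama.


(** * Supports of [G u x] *)

Section Support.
Variables (K : fieldType) (U : algType K) (G : U -> Prop).
Hypotheses (HG : comm_subalg G) (NG : noetherian G).
Variable M : lmodType U.
Variables (u : U) (GuG_left : GuG_fg_left G u) (GuG_right : GuG_fg_right G u).

Lemma csa_nth (cs : seq U) i : (forall c, c \in cs -> G c) -> G cs`_i.
Proof.
move=> H; have [ic|ic] := ltnP i (size cs); first by apply: H; apply: mem_nth.
by rewrite nth_default //; exact: (csa0 HG).
Qed.

Lemma GuG_mul a b : G a -> G b -> GuG G u (a * u * b).
Proof.
move=> Ga Gb; exists [:: (a, b)]; rewrite big_seq1; split => // ab.
by rewrite mem_seq1 => /eqP ->.
Qed.

Lemma GuG_mulr w g : GuG G u w -> G g -> GuG G u (w * g).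
Proof.
move=> [s [Hs ->]] Gg; exists (map (fun ab => (ab.1, ab.2 * g)) s); split.
  by move=> _ /mapP [[a b] /Hs [Ga Gb] ->]; split => //; exact: (csaM HG).
by rewrite big_map big_distrl /=; apply: eq_bigr => ab _; rewrite mulrA.
Qed.

Lemma sum_pairs_ind (Pr : U -> Prop) (s : seq (U * U)) :
  Pr 0 -> (forall x y, Pr x -> Pr y -> Pr (x + y)) ->
  (forall ab, ab \in s -> Pr (ab.1 * u * ab.2)) -> Pr (\sum_(ab <- s) ab.1 * u * ab.2).
Proof. by move=> P0 PD H; rewrite big_seq; apply: big_ind. Qed.

Inductive quG (q : U -> Prop) : U -> Prop :=
| quG0 : quG q 0
| quG_gen a b : q a -> G b -> quG q (a * u * b)
| quGD x y : quG q x -> quG q y -> quG q (x + y).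

Lemma quG_mulr q w g : G g -> quG q w -> quG q (w * g).
Proof.
move=> Gg; elim=> [|a b qa Gb|x y _ IHx _ IHy].
- by rewrite mul0r; exact: quG0.
- by rewrite -mulrA; apply: quG_gen => //; exact: (csaM HG).
- by rewrite mulrDl; apply: quGD.
Qed.

Lemma quG_sum q n (F : 'I_n -> U) : (forall j, quG q (F j)) -> quG q (\sum_(j < n) F j).
Proof. by move=> H; apply: big_ind => //; [exact: quG0 | exact: quGD]. Qed.

(* Nakayama for the finitely generated right [G]-module [G u G], modulo [q u G]. *)
Lemma GuG_absorb (q Q mm : U -> Prop) : idealG G Q -> idealG G mm -> psub Q mm ->
  (forall w, GuG G u w -> quG_Gup G q Q u w) ->
  exists c, [/\ G c, mm (1 - c) & forall w, GuG G u w -> quG q (w * c)].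
Proof.
move=> HQ Hmm QQmm GuG_split; have [rv [rvB rvgen]] := GuG_right.
pose actR (a w : U) := w * a.
have actM a b v : G a -> G b -> actR (a * b) v = actR a (actR b v).
  by move=> Ga Gb; rewrite /actR (csaC HG Ga Gb) mulrA.
have rv_span i : (i < size rv)%N ->
    mspan actR (quG q) mm (size rv) (fun j => rv`_j) (actR 1 rv`_i).
  move=> ir; rewrite /actR mulr1.
  have [s [Hs ->]] := GuG_split _ (rvB _ (mem_nth 0 ir)).
  apply: sum_pairs_ind => [|x y|[a b] /Hs /= [[qa Gb]|[Ga Qb]]].
  - by apply: mspanW; exact: quG0.
  - exact: mspanD.
  - by apply: mspanW; apply: quG_gen.
  rewrite -[a * u]mulr1; have [cs [_ csG ->]] := rvgen _ (GuG_mul Ga (csa1 HG)).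
  rewrite big_distrl /=; apply: mspan_sum => [|j]; first exact: quG0.
  rewrite -mulrA; apply: (mspan_gen actR (quG q) (m := mm)) => //.
  by apply: QQmm; apply: (idGM HQ) => //; exact: csa_nth.
have actDr a v w : actR a (v + w) = actR a v + actR a w by rewrite /actR mulrDl.
have actDl a b v : actR (a + b) v = actR a v + actR b v by rewrite /actR mulrDr.
have mm0 : mm (1 - 1) by rewrite subrr; exact: (idG0 Hmm).
have [c [Gc mc Hc]] := nakayama HG actDr actDl actM (quG0 _) (@quGD q)
  (fun a v Ga => quG_mulr Ga) Hmm (csa1 HG) mm0 rv_span.
exists c; split => // w /rvgen [cs [_ csG ->]].
rewrite big_distrl /=; apply: quG_sum => j.
by rewrite (csa_mulrAC HG) //; [apply: quG_mulr; [exact: csa_nth | apply: Hc] | exact: csa_nth].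
Qed.

Definition absorber (q : U -> Prop) c := G c /\ forall w, GuG G u w -> quG q (w * c).

Lemma absorber_ideal q : idealG G (absorber q).
Proof.
split.
- by move=> c [].
- by split => [|w _]; [exact: (csa0 HG) | rewrite mulr0; exact: quG0].
- move=> c d [Gc Hc] [Gd Hd]; split => [|w Bw]; first exact: (csaD HG).
  by rewrite mulrDr; apply: quGD; [apply: Hc | apply: Hd].
- move=> h c Gh [Gc Hc]; split => [|w Bw]; first exact: (csaM HG).
  by rewrite mulrA; apply: Hc; apply: GuG_mulr.
Qed.

(* If not, a maximal ideal [mm] contains [absorber q] and [ann x]; an associated
   prime [Q] of [G x] inside [mm], with Nakayama, yields an element of
   [absorber q] congruent to [1] modulo [mm]. *)
Lemma absorber_comaximal (q : U -> Prop) (x : M) :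
  (forall p, Ass G (Gcyc G x) p -> forall w, GuG G u w -> quG_Gup G q p u w) ->
  ideal_sum (absorber q) (annG G x) 1.
Proof.
move=> split_all; apply: NNPP => n1.
pose I0 := ideal_sum (absorber q) (annG G x).
have [mm maxm] : exists mm, maximal_in (proper_above G I0) mm.
  apply: (noetherian_maximal NG); first by move=> I [].
  exists I0; split => //; apply: (ideal_sum_ideal HG); first exact: (absorber_ideal q).
  exact: (annG_ideal HG x).
have [[Imm mm1 I0mm] _] := maxm.
have annmm : psub (annG G x) mm.
  by move=> i xi; apply: I0mm; apply: ideal_sumr xi; exact: (absorber_ideal q).
have [Q [AQ Qmm]] := ass_prime_below HG NG (maximal_proper_prime HG maxm) annmm.
have [c [Gc mc Ac]] := GuG_absorb (prime_ideal AQ.1) Imm Qmm (split_all _ AQ).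
apply: mm1; rewrite -(subrK c 1); apply: (idGD Imm) => //.
by apply: I0mm; apply: ideal_suml; [exact: (annG_ideal HG x) | split].
Qed.

(* Nakayama for the finitely generated [G]-module [G u G x]: it equals [q (G u G x)]. *)
Lemma GuG_killed (q : U -> Prop) (x : M) : idealG G q -> ideal_sum (absorber q) (annG G x) 1 ->
  exists c, [/\ G c, q (1 - c) & forall w, GuG G u w -> c *: (w *: x) = 0].
Proof.
move=> Hq [a [i [[_ Aa] [_ ix] ai1]]]; have [lv [lvB lvgen]] := GuG_left.
pose actL (b : U) (v : M) := b *: v.
pose vs j := lv`_j *: x.
have qG_span y : quG q y -> mspan actL (eq^~ 0) q (size lv) vs (y *: x).
  elim=> [|a' b qa Gb|y1 y2 _ IH1 _ IH2]; first by apply: mspanW; rewrite scale0r.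
    have [cs [_ csG e]] := lvgen _ (GuG_mul (csa1 HG) Gb).
    rewrite mul1r in e; rewrite -mulrA e mulr_sumr scaler_suml.
    apply: mspan_sum => [//|j].
    rewrite mulrA -scalerA; apply: (mspan_gen actL _ (m := q)) => //.
    by rewrite (csaC HG (idG_sub Hq qa) (csa_nth j csG)); apply: (idGM Hq) => //; exact: csa_nth.
  by rewrite scalerDl; apply: mspanD.
have lv_span j : (j < size lv)%N -> mspan actL (eq^~ 0) q (size lv) vs (actL 1 (vs j)).
  move=> jl; rewrite /actL scale1r /vs.
  have -> : lv`_j *: x = (lv`_j * a) *: x.
    by rewrite -{1}[x]scale1r ai1 scalerDl scalerDr ix scaler0 addr0 scalerA.
  by apply: qG_span; apply: Aa; apply: lvB; exact: mem_nth.
have actDr b v w : actL b (v + w) = actL b v + actL b w by rewrite /actL scalerDr.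
have actDl b b' v : actL (b + b') v = actL b v + actL b' v by rewrite /actL scalerDl.
have actM b b' v : G b -> G b' -> actL (b * b') v = actL b (actL b' v) by rewrite /actL scalerA.
have WD (v w : M) : v = 0 -> w = 0 -> v + w = 0 by move=> -> ->; rewrite addr0.
have Wact b (v : M) : G b -> v = 0 -> actL b v = 0 by move=> _ ->; rewrite /actL scaler0.
have q0 : q (1 - 1) by rewrite subrr; exact: (idG0 Hq).
have [c [Gc qc Hc]] := nakayama HG actDr actDl actM erefl WD Wact Hq (csa1 HG) q0 lv_span.
exists c; split => // w /lvgen [cs [_ csG ->]].
rewrite scaler_suml scaler_sumr big1 // => j _.
rewrite -scalerA (csa_scalerC HG _ Gc (csa_nth j csG)).
by have := Hc j (ltn_ord j); rewrite /actL /vs => ->; rewrite scaler0.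
Qed.

Lemma Supp_GuG_Ass (x : M) (q : U -> Prop) : Supp G (Gcyc G (u *: x)) q ->
  exists p, Ass G (Gcyc G x) p /\ ~ (forall w, GuG G u w -> quG_Gup G q p u w).
Proof.
move=> [Hq [_ [[g [Gg ->]] Hz]]]; apply: NNPP => Hn.
have split_all p : Ass G (Gcyc G x) p -> forall w, GuG G u w -> quG_Gup G q p u w.
  by move=> Ap; apply: NNPP => np; apply: Hn; exists p.
have [c [Gc qc Hc]] := GuG_killed (prime_ideal Hq) (absorber_comaximal split_all).
have nqc : ~ q c.
  by move=> qc'; apply: (prime_not1 Hq); rewrite -(subrK c 1); apply: (idGD (prime_ideal Hq)).
have /eqP [] := Hz c Gc nqc.
by rewrite [g *: _]scalerA -[g * u]mulr1; apply: Hc; apply: GuG_mul => //; exact: (csa1 HG).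
Qed.

End Support.

Theorem lemma4p1 (K : closedFieldType) (charK0 : [pchar K] =i pred0)
  (U : algType K) (G : U -> Prop) (HG : standing G) (M : lmodType U) :
  (forall (u : U) (x : M) (q : U -> Prop),
     Supp G (Gcyc G (u *: x)) q ->
     exists p : U -> Prop, Ass G (Gcyc G x) p /\
       ~ (forall w, GuG G u w -> quG_Gup G q p u w))
  /\
  ((exists n, forall P, Ass G (fun _ : M => True) P -> coheight G P n) ->
   forall (x y : M) (P : U -> Prop),
     Ass G (Gcyc G (x + y)) P -> Ass G (Gcyc G x) P \/ Ass G (Gcyc G y) P).
Proof.
(* Only (i) and (iii) of [standing] are used, and [K] may be any field. *)
case: HG => HGc [s [sG gen]] _ GuG_fg.
have NG := noetherian_fin_gen HGc sG gen.
split; last exact: (Ass_Gcyc_add HGc NG).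
move=> u x q; have [GuG_left GuG_right] := GuG_fg u.
exact: (Supp_GuG_Ass HGc NG GuG_left GuG_right).
Qed.
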